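(* Let $1\le m\le N$, $a\in V$ and $b\in\wedge^m(V)$. Then $\mathbf{x}\wedge b\in\mathcal{P}_1\otimes\wedge^{m+1}(V)$ and $$\sum_{i=1}^Na_i\mathcal{D}_i(\mathbf{x}\wedge b)=(1-\gamma\kappa)\,a\wedge b,$$ where the $\mathcal{D}_i$ are the Dunkl operators on $\mathcal{P}\otimes\wedge^{m+1}(V)$. In particular $\mathbf{x}\wedge b$ is singular for $\kappa=1/\gamma$, i.e. $\mathcal{D}_i(\mathbf{x}\wedge b)=0$ for all $1\le i\le N$ when $\kappa=1/\gamma$.
   Context: $R\subset\mathbb{R}^N$ is a reduced root system with $\operatorname{span}_{\mathbb{R}}R=\mathbb{R}^N$, $|v|^2=2$ for all $v\in R$, positive roots $R_+$; $W$ is the reflection group generated by $\sigma_v\colon x\mapsto x-\langle x,v\rangle v$, assumed to have one conjugacy class of reflections, so $W$ is indecomposable and its reflection representation $\tau$ on $V=\mathbb{R}^N$ is irreducible. $\gamma:=2\#R_+/N$ (the Coxeter number). $\{u_i\}$ is the standard orthonormal basis of $V$ and $\mathbf{x}:=\sum_{i=1}^Nx_i\otimes u_i\in\mathcal{P}_1\otimes V$, where $\mathcal{P}_1$ denotes linear polynomials in $x=(x_1,\dots,x_N)$; wedge products with $\mathbf{x}$ are taken in the $\wedge$-factor. $\tau_k$ is the representation of $W$ on $\wedge^k(V)$ induced by $\tau$. $W$ acts on $\mathcal{P}\otimes\wedge^k(V)$ by $w(p(x)\otimes b)=p(xw)\otimes\tau_k(w)b$, and the Dunkl operators (with constant parameter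 $\kappa$) are $\mathcal{D}_i(p\otimes b)=\frac{\partial p}{\partial x_i}\otimes b+\kappa\sum_{v\in R_+}\frac{p(x)-p(x\sigma_v)}{\langle x,v\rangle}v_i\otimes\tau_k(\sigma_v)b$, extended linearly. *)

From HB Require Import structures.
From mathcomp Require Import all_boot all_order all_algebra.
From mathcomp Require Import mpoly.
From Stdlib Require Import ClassicalEpsilon.

Set Implicit Arguments.
Unset Strict Implicit.
Unset Printing Implicit Defensive.

Import Order.TTheory GRing.Theory Num.Theory.
Local Open Scope ring_scope.

Section Dunkl.
Variables (R : realFieldType) (N : nat).

Definition dot (u v : 'rV[R]_N) : R := (u *m v^T) 0 0.

(* sigma_v as a matrix acting on row vectors: x sigma_v = x - <x,v> v *)
Definition refl_mx (v : 'rV[R]_N) : 'M[R]_N := 1%:M - v^T *m v.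

Definition root_system (Rt : seq 'rV[R]_N) : Prop :=
  [/\ uniq Rt,
      (<<Rt>>%VS = fullv),
      (forall v, v \in Rt -> dot v v = 2),
      (forall u v, u \in Rt -> v \in Rt -> u *m refl_mx v \in Rt)
    & (forall v (c : R), v \in Rt -> c *: v \in Rt -> c = 1 \/ c = -1)].

Definition generic (Rt : seq 'rV[R]_N) (u0 : 'rV[R]_N) : Prop :=
  forall v, v \in Rt -> dot u0 v != 0.
Definition pos_roots (Rt : seq 'rV[R]_N) (u0 : 'rV[R]_N) : seq 'rV[R]_N :=
  [seq v <- Rt | 0 < dot u0 v].

Inductive inW (Rt : seq 'rV[R]_N) : 'M[R]_N -> Prop :=
  | inW1 : inW Rt 1%:M
  | inWM v w : v \in Rt -> inW Rt w -> inW Rt (w *m refl_mx v).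

Definition one_refl_class (Rt : seq 'rV[R]_N) : Prop :=
  forall u v, u \in Rt -> v \in Rt ->
    exists w, inW Rt w /\ w \in unitmx /\ refl_mx u = invmx w *m refl_mx v *m w.

Definition coxeter (Rp : seq 'rV[R]_N) : R := 2 * (size Rp)%:R / N%:R.

(* ---------- exterior algebra /\(V) with coefficients in a comm. ring C,
   in the basis e_S = u_{s1} /\ ... /\ u_{sk} (s1 < ... < sk) ---------- *)
Local Notation ext C := {ffun {set 'I_N} -> C}.

Definition ebasis (C : comNzRingType) (S : {set 'I_N}) : ext C :=
  [ffun T => (T == S)%:R].

(* sign of e_S /\ e_T = sgn S T e_(S u T) for disjoint S, T *)
Definition wsign (C : comNzRingType) (S T : {set 'I_N}) : C :=
  (-1) ^+ #|[set p : 'I_N * 'I_N | [&& p.1 \in S, p.2 \in T & (p.2 < p.1)%N]]|.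

Definition wedge (C : comNzRingType) (a b : ext C) : ext C :=
  [ffun U => \sum_(S : {set 'I_N}) \sum_(T : {set 'I_N})
     if (S :&: T == set0) && (S :|: T == U) then wsign C S T * a S * b T else 0].

Definition escale (C : comNzRingType) (c : C) (b : ext C) : ext C :=
  [ffun S => c * b S].

Definition is_kvec (C : comNzRingType) (k : nat) (b : ext C) : Prop :=
  forall S : {set 'I_N}, #|S| != k -> b S = 0.

Definition vec1 (u : 'rV[R]_N) : ext R :=
  \sum_(i < N) escale (u 0 i) (ebasis R [set i]).

Definition tau (w : 'M[R]_N) (b : ext R) : ext R :=
  \sum_(S : {set 'I_N})
     escale (b S) (\big[@wedge R/ebasis R set0]_(i <- enum S) vec1 (delta_mx 0 i *m w)).

Local Notation poly := {mpoly R[N]}.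

Definition tens (p : poly) (c : ext R) : ext poly :=
  [ffun S => p * (c S)%:MP].

Definition linpoly (v : 'rV[R]_N) : poly := \sum_(j < N) v 0 j *: 'X_j.

Definition psub (w : 'M[R]_N) (p : poly) : poly :=
  p \mPo [tuple \sum_(i < N) w i j *: 'X_i | j < N].

(* the polynomial (p(x) - p(x sigma_v)) / <x,v> : the unique q with
   p(x) - p(x sigma_v) = q * <x,v> (exists for v != 0) *)
Definition ddiff (v : 'rV[R]_N) (p : poly) : poly :=
  epsilon (inhabits 0) (fun q => p - psub (refl_mx v) p = q * linpoly v).

Definition dunkl (Rp : seq 'rV[R]_N) (kappa : R) (i : 'I_N)
    (F : ext poly) : ext poly :=
  \sum_(S : {set 'I_N})
    (tens (mderiv i (F S)) (ebasis R S)
     + \sum_(v <- Rp)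
         tens ((kappa * v 0 i) *: ddiff v (F S)) (tau (refl_mx v) (ebasis R S))).

Definition xvec : ext poly :=
  \sum_(i < N) tens 'X_i (ebasis R [set i]).

Definition cst (b : ext R) : ext poly := tens 1 b.

End Dunkl.

From HB Require Import structures.
From mathcomp Require Import all_boot all_order all_algebra.
From mathcomp Require Import mpoly.
From mathcomp Require Import ring.
From Stdlib Require Import ClassicalEpsilon.

Set Implicit Arguments.
Unset Strict Implicit.
Unset Printing Implicit Defensive.
Import Order.TTheory GRing.Theory Num.Theory.
Local Open Scope ring_scope.

(* Write F = x /\ b = sum_j x_j (u_j /\ b).  Its coefficients are linear
   forms, so d_i F = u_i /\ b and the divided difference of F along a root v
   is the constant v /\ b.  Since sigma_v fixes v^perp and negates v,
   tau(sigma_v) acts on v /\ b by -1, whence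
   D_i F = u_i /\ b - kappa (sum_{v in R+} v_i v) /\ b.
   Finally sum_{v in R+} <a,v> v = gamma a: the matrix M = sum_{v in R} v^T v
   commutes with W, so every root is an eigenvector of M; all eigenvalues
   agree because the reflections are conjugate in W, and the roots span V,
   so M is scalar, and its trace 2 #R = 4 #R+ gives M = 2 gamma. *)

Section ExteriorAlgebra.
Variables (N : nat) (C : comNzRingType).
Local Notation ext := {ffun {set 'I_N} -> C}.
Local Notation e i := (ebasis C [set i]).
Implicit Types (a b X : ext) (k l : C) (i j : 'I_N) (S T : {set 'I_N}).

Lemma escalerDr k a b : escale k (a + b) = escale k a + escale k b.
Proof. by apply/ffunP => U; rewrite !ffunE mulrDr. Qed.

Lemma escalerDl k l a : escale (k + l) a = escale k a + escale l a.
Proof. by apply/ffunP => U; rewrite !ffunE mulrDl. Qed.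

Lemma escaler0 k : escale k (0 : ext) = 0.
Proof. by apply/ffunP => U; rewrite !ffunE mulr0. Qed.

Lemma escale0r a : escale 0 a = 0.
Proof. by apply/ffunP => U; rewrite !ffunE mul0r. Qed.

Lemma escale1r a : escale 1 a = a.
Proof. by apply/ffunP => U; rewrite !ffunE mul1r. Qed.

Lemma escaleN1r a : escale (-1) a = - a.
Proof. by apply/ffunP => U; rewrite !ffunE mulN1r. Qed.

Lemma escalerN k a : escale k (- a) = - escale k a.
Proof. by apply/ffunP => U; rewrite !ffunE mulrN. Qed.

Lemma escaleNr k a : escale (- k) a = - escale k a.
Proof. by apply/ffunP => U; rewrite !ffunE mulNr. Qed.

Lemma escalerA k l a : escale k (escale l a) = escale (k * l) a.
Proof. by apply/ffunP => U; rewrite !ffunE mulrA. Qed.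

Lemma escaler_sumr (I : Type) (r : seq I) (P : pred I) (F : I -> ext) k :
  escale k (\sum_(i <- r | P i) F i) = \sum_(i <- r | P i) escale k (F i).
Proof. exact: (big_morph _ (escalerDr k) (escaler0 k)). Qed.

Lemma wedgeDl a1 a2 b : wedge (a1 + a2) b = wedge a1 b + wedge a2 b.
Proof.
apply/ffunP => U; rewrite !ffunE -big_split; apply: eq_bigr => S _.
rewrite -big_split; apply: eq_bigr => T _; rewrite !ffunE.
by case: ifP => _ /=; rewrite ?addr0 // mulrDr mulrDl.
Qed.

Lemma wedgeDr a b1 b2 : wedge a (b1 + b2) = wedge a b1 + wedge a b2.
Proof.
apply/ffunP => U; rewrite !ffunE -big_split; apply: eq_bigr => S _.
rewrite -big_split; apply: eq_bigr => T _; rewrite !ffunE.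
by case: ifP => _ /=; rewrite ?addr0 // mulrDr.
Qed.

Lemma wedgeZl k a b : wedge (escale k a) b = escale k (wedge a b).
Proof.
apply/ffunP => U; rewrite !ffunE mulr_sumr; apply: eq_bigr => S _.
rewrite mulr_sumr; apply: eq_bigr => T _; rewrite ffunE.
by case: ifP; rewrite ?mulr0 // !mulrA [_ * k]mulrC.
Qed.

Lemma wedgeZr k a b : wedge a (escale k b) = escale k (wedge a b).
Proof.
apply/ffunP => U; rewrite !ffunE mulr_sumr; apply: eq_bigr => S _.
rewrite mulr_sumr; apply: eq_bigr => T _; rewrite ffunE.
by case: ifP; rewrite ?mulr0 // mulrCA.
Qed.

Lemma wedge0l b : wedge 0 b = 0.
Proof.
apply/ffunP => U; rewrite !ffunE big1 // => S _; rewrite big1 // => T _.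
by rewrite ffunE; case: ifP; rewrite ?mulr0 ?mul0r.
Qed.

Lemma wedge0r a : wedge a 0 = 0.
Proof.
apply/ffunP => U; rewrite !ffunE big1 // => S _; rewrite big1 // => T _.
by rewrite ffunE; case: ifP; rewrite ?mulr0.
Qed.

Lemma wedgeNl a b : wedge (- a) b = - wedge a b.
Proof. by rewrite -[- a]escaleN1r wedgeZl escaleN1r. Qed.

Lemma wedgeNr a b : wedge a (- b) = - wedge a b.
Proof. by rewrite -[- b]escaleN1r wedgeZr escaleN1r. Qed.

Lemma wedge_suml (I : Type) (r : seq I) (P : pred I) (F : I -> ext) b :
  wedge (\sum_(i <- r | P i) F i) b = \sum_(i <- r | P i) wedge (F i) b.
Proof.
by apply: (big_morph (fun a => wedge a b)); [move=> x y; apply: wedgeDl | apply: wedge0l].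
Qed.

Lemma wedge_sumr (I : Type) (r : seq I) (P : pred I) (F : I -> ext) a :
  wedge a (\sum_(i <- r | P i) F i) = \sum_(i <- r | P i) wedge a (F i).
Proof. exact: (big_morph (wedge a) (wedgeDr a) (wedge0r a)). Qed.

Lemma ext_sum_ebasis a : a = \sum_S escale (a S) (ebasis C S).
Proof.
apply/ffunP => U; rewrite sum_ffunE (bigD1 U) //= !ffunE eqxx mulr1 big1 ?addr0 //.
by move=> S /negbTE nSU; rewrite !ffunE eq_sym nSU mulr0.
Qed.

Lemma wedge_ebasis S T : wedge (ebasis C S) (ebasis C T) =
  if S :&: T == set0 then escale (wsign C S T) (ebasis C (S :|: T)) else 0.
Proof.
apply/ffunP => U; rewrite !ffunE (bigD1 S) //= (bigD1 T) //= !ffunE !eqxx.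
rewrite big1 => [|T' /negbTE nT]; last by rewrite !ffunE nT; case: ifP; rewrite ?mulr0.
rewrite big1 => [|S' /negbTE nS]; last first.
  by rewrite big1 // => T' _; rewrite !ffunE nS; case: ifP; rewrite ?mulr0 ?mul0r.
rewrite !addr0; case: (S :&: T == set0) => /=; last by rewrite ffunE.
by rewrite !ffunE !mulr1 eq_sym; case: ifP; rewrite ?mulr1 ?mulr0.
Qed.

Lemma wedge_e_ebasis i S : wedge (e i) (ebasis C S) =
  if i \in S then 0 else escale (wsign C [set i] S) (ebasis C (i |: S)).
Proof. by rewrite wedge_ebasis setI_eq0 disjoints1; case: (i \in S). Qed.

Definition inversions S T : nat :=
  #|[set p : 'I_N * 'I_N | [&& p.1 \in S, p.2 \in T & (p.2 < p.1)%N]]|.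

Lemma wsignE S T : wsign C S T = (-1) ^+ inversions S T.
Proof. by []. Qed.

Lemma inversionsUr S T1 T2 : [disjoint T1 & T2] ->
  inversions S (T1 :|: T2) = (inversions S T1 + inversions S T2)%N.
Proof.
rewrite -setI_eq0 => /eqP T12; rewrite /inversions.
set A := [set p | _]; set A1 := [set p | _]; set A2 := [set p | _].
have -> : A = A1 :|: A2.
  apply/setP => p; rewrite !inE.
  by case: (p.1 \in S); case: (p.2 \in T1); case: (p.2 \in T2); case: (_ < _)%N.
rewrite cardsU; have -> : A1 :&: A2 = set0.
  apply/setP => p; rewrite !inE; apply/negP => /andP [/and3P [_ p1 _] /and3P [_ p2 _]].
  by have := in_set0 p.2; rewrite -T12 inE p1 p2.
by rewrite cards0 subn0.
Qed.

Lemma inversions11 i j : inversions [set i] [set j] = (j < i)%N.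
Proof.
rewrite /inversions; case: ltnP => ji.
  suff -> : [set p : 'I_N * 'I_N | [&& p.1 \in [set i], p.2 \in [set j] & (p.2 < p.1)%N]]
      = [set (i, j)] by rewrite cards1.
  apply/setP => -[x y]; rewrite !inE /= xpair_eqE.
  by case: eqP => [->|]; case: eqP => [->|] //=; rewrite ji.
apply/eqP; rewrite cards_eq0; apply/eqP/setP => -[x y]; rewrite !inE /=.
by case: eqP => [->|]; case: eqP => [->|] //=; rewrite ltnNge ji.
Qed.

Lemma inversions1 i S : inversions [set i] S = #|[set j in S | (j < i)%N]|.
Proof.
have pair_inj : injective (pair i : 'I_N -> 'I_N * 'I_N) by move=> y1 y2 [].
rewrite /inversions -(card_imset _ pair_inj).
apply: eq_card => -[x y]; rewrite !inE /=.
apply/idP/imsetP => [/and3P [/eqP -> yS yi]|[z]]; first by exists y; rewrite // inE yS.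
by rewrite inE => /andP [zS zi] [-> ->]; rewrite eqxx zS.
Qed.

Lemma wsign11C i j : i != j -> wsign C [set i] [set j] = - wsign C [set j] [set i].
Proof.
move=> nij; rewrite !wsignE !inversions11.
case: (ltngtP i j) => [_|_|/val_inj eij] /=; last by rewrite eij eqxx in nij.
  by rewrite expr0 expr1 opprK.
by rewrite expr0 expr1.
Qed.

Lemma wsignU1r i j S : j \notin S ->
  wsign C [set i] (j |: S) = wsign C [set i] [set j] * wsign C [set i] S.
Proof. by move=> jS; rewrite !wsignE inversionsUr ?exprD // disjoints1. Qed.

Lemma wedge_e_swap_ebasis i j S :
  wedge (e i) (wedge (e j) (ebasis C S)) = - wedge (e j) (wedge (e i) (ebasis C S)).
Proof.
have [<-|nij] := eqVneq i j.
  rewrite wedge_e_ebasis; case: ifP => iS; first by rewrite wedge0r oppr0.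
  by rewrite wedgeZr wedge_e_ebasis setU11 /= escaler0 oppr0.
rewrite [wedge (e j) _]wedge_e_ebasis [wedge (e i) (ebasis C S)]wedge_e_ebasis.
case: (boolP (j \in S)) => jS /=.
  case: ifP => iS; rewrite ?wedge0r ?oppr0 // wedgeZr wedge_e_ebasis.
  by rewrite in_setU1 jS orbT /= escaler0 oppr0.
case: (boolP (i \in S)) => iS /=.
  by rewrite wedgeZr wedge_e_ebasis in_setU1 iS orbT /= escaler0 wedge0r oppr0.
rewrite !wedgeZr !wedge_e_ebasis !in_setU1 (negbTE iS) (negbTE jS) (negbTE nij).
rewrite eq_sym (negbTE nij) /= !escalerA -escaleNr [j |: (i |: S)]setUCA.
by congr (escale _ _); rewrite !wsignU1r // (wsign11C nij); ring.
Qed.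

Lemma wedge_e_swap i j X :
  wedge (e i) (wedge (e j) X) = - wedge (e j) (wedge (e i) X).
Proof.
rewrite (ext_sum_ebasis X) !wedge_sumr -sumrN; apply: eq_bigr => S _.
by rewrite !wedgeZr wedge_e_swap_ebasis escalerN.
Qed.

End ExteriorAlgebra.

Section Vectors.
Variables (R : realFieldType) (N : nat).
Local Notation ext := {ffun {set 'I_N} -> R}.
Local Notation e i := (ebasis R [set i]).
Implicit Types (i j : 'I_N) (p q u v : 'rV[R]_N) (X : ext).

Lemma vec1_delta i : vec1 (delta_mx 0 i) = e i.
Proof.
rewrite /vec1 (bigD1 i) //= big1 ?addr0 => [|j nji]; first by rewrite mxE !eqxx escale1r.
by rewrite mxE (negbTE nji) andbF escale0r.
Qed.

Lemma vec1D u v : vec1 (u + v) = vec1 u + vec1 v.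
Proof. by rewrite /vec1 -big_split; apply: eq_bigr => i _; rewrite mxE escalerDl. Qed.

Lemma vec1Z k v : vec1 (k *: v) = escale k (vec1 v).
Proof. by rewrite /vec1 escaler_sumr; apply: eq_bigr => i _; rewrite mxE escalerA. Qed.

Lemma vec10 : vec1 (0 : 'rV[R]_N) = 0.
Proof. by rewrite -(scale0r 0) vec1Z escale0r. Qed.

Lemma vec1N v : vec1 (- v) = - vec1 v.
Proof. by rewrite -scaleN1r vec1Z escaleN1r. Qed.

Lemma vec1_sum (I : Type) (r : seq I) (P : pred I) (F : I -> 'rV[R]_N) :
  vec1 (\sum_(i <- r | P i) F i) = \sum_(i <- r | P i) vec1 (F i).
Proof. exact: (big_morph _ vec1D vec10). Qed.

Lemma wedge_vec1l p X : wedge (vec1 p) X = \sum_i escale (p 0 i) (wedge (e i) X).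
Proof. by rewrite /vec1 wedge_suml; apply: eq_bigr => i _; rewrite wedgeZl. Qed.

Lemma wedge_vec1_swap p q X :
  wedge (vec1 p) (wedge (vec1 q) X) = - wedge (vec1 q) (wedge (vec1 p) X).
Proof.
have swap_e i Y : wedge (e i) (wedge (vec1 q) Y) = - wedge (vec1 q) (wedge (e i) Y).
  rewrite !wedge_vec1l wedge_sumr -sumrN; apply: eq_bigr => j _.
  by rewrite wedgeZr wedge_e_swap escalerN.
rewrite [wedge (vec1 p) (wedge _ _)]wedge_vec1l [wedge (vec1 p) X]wedge_vec1l.
rewrite wedge_sumr -sumrN; apply: eq_bigr => i _.
by rewrite wedgeZr swap_e escalerN.
Qed.

Lemma wedge_vec1_self p X : wedge (vec1 p) (wedge (vec1 p) X) = 0.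
Proof.
have := wedge_vec1_swap p p X; move: (wedge (vec1 p) _) => Y Y_opp.
apply/ffunP => S; have := congr1 (fun f : ext => f S) Y_opp; rewrite /= !ffunE => YS.
have : (2 : R) * Y S = 0 by rewrite mulr2n mulrDl mul1r {1}YS addNr.
by move/eqP; rewrite mulf_eq0 pnatr_eq0 /= => /eqP.
Qed.

End Vectors.

Section WedgeSeq.
Variables (R : realFieldType) (N : nat).
Local Notation ext := {ffun {set 'I_N} -> R}.
Local Notation ord_lt := (relpre (val : 'I_N -> nat) ltn).
Let ord_lt_trans : transitive ord_lt := fun _ _ _ => @ltn_trans _ _ _.
Let ord_lt_irr : irreflexive ord_lt := fun x => ltnn (val x).
Implicit Types (i j : 'I_N) (g : 'I_N -> 'rV[R]_N) (l : seq 'I_N) (S : {set 'I_N}).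

Definition wedge_seq g l : ext := \big[@wedge N R/ebasis R set0]_(j <- l) vec1 (g j).

Lemma wedge_seq_cons g j l : wedge_seq g (j :: l) = wedge (vec1 (g j)) (wedge_seq g l).
Proof. by rewrite /wedge_seq big_cons. Qed.

Lemma wedge_seq_insert g i l1 l2 :
  wedge (vec1 (g i)) (wedge_seq g (l1 ++ l2))
  = escale ((-1) ^+ size l1) (wedge_seq g (l1 ++ i :: l2)).
Proof.
elim: l1 => [|j l1 IH] /=; first by rewrite expr0 escale1r wedge_seq_cons.
by rewrite !wedge_seq_cons wedge_vec1_swap IH wedgeZr exprS mulN1r escaleNr.
Qed.

Lemma wedge_seq_mem g i l : i \in l -> wedge (vec1 (g i)) (wedge_seq g l) = 0.
Proof.
case/splitPr => l1 l2.
have -> : wedge_seq g (l1 ++ i :: l2)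
    = escale ((-1) ^+ size l1) (wedge (vec1 (g i)) (wedge_seq g (l1 ++ l2))).
  by rewrite wedge_seq_insert escalerA -expr2 sqrr_sign escale1r.
by rewrite wedgeZr wedge_vec1_self escaler0.
Qed.

Lemma sorted_enum_set S : sorted ord_lt (enum S).
Proof.
apply: (sorted_filter ord_lt_trans).
by rewrite -enumT -sorted_map val_enum_ord iota_ltn_sorted.
Qed.

Lemma sorted_filter_lt_cat s i : sorted ord_lt s ->
  s = [seq j : 'I_N <- s | (j < i)%N] ++ [seq j : 'I_N <- s | (i <= j)%N].
Proof.
move=> s_sorted; apply: (irr_sorted_eq ord_lt_trans ord_lt_irr) => //.
  move: s_sorted; rewrite !(sorted_pairwise ord_lt_trans) => s_pw.
  rewrite pairwise_cat; apply/and3P; split; try exact: pairwise_filter.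
  apply/allrelP => x y; rewrite !mem_filter => /andP [xi _] /andP [iy _].
  exact: leq_trans xi iy.
by move=> x; rewrite mem_cat !mem_filter /= -andb_orl ltnNge orNb.
Qed.

Lemma enum_setU1 S i : i \notin S ->
  enum (i |: S)
  = [seq j : 'I_N <- enum S | (j < i)%N] ++ i :: [seq j : 'I_N <- enum S | (i <= j)%N].
Proof.
move=> iS; apply: (irr_sorted_eq ord_lt_trans ord_lt_irr); first exact: sorted_enum_set.
  have := sorted_enum_set S; rewrite !(sorted_pairwise ord_lt_trans) => S_pw.
  rewrite pairwise_cat pairwise_cons; apply/and3P; split.
  - apply/allrelP => x y; rewrite in_cons !mem_filter /= => /andP [xi _].
    by case/orP => [/eqP -> //| /andP [iy _]]; exact: leq_trans xi iy.
  - exact: pairwise_filter.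
  apply/andP; split; last exact: pairwise_filter.
  apply/allP => y; rewrite mem_filter mem_enum => /andP [iy yS].
  change (i < y)%N; rewrite ltn_neqAle iy andbT.
  by apply: contraNneq iS => /val_inj ->.
move=> x; rewrite mem_enum mem_cat in_cons mem_filter mem_enum mem_filter mem_enum /=.
rewrite in_setU1 ltnNge.
by case: (i <= x)%N; case: (x == i); case: (x \in S).
Qed.

Lemma size_filter_lt_enum S i :
  size [seq j : 'I_N <- enum S | (j < i)%N] = inversions [set i] S.
Proof.
rewrite inversions1 cardE; apply/esym/perm_size; apply: uniq_perm.
- exact: enum_uniq.
- by rewrite filter_uniq // enum_uniq.
by move=> x; rewrite mem_enum mem_filter mem_enum !inE andbC.
Qed.

Lemma wedge_seq_enumU1 g S i : i \notin S ->
  wedge (vec1 (g i)) (wedge_seq g (enum S))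
  = escale (wsign R [set i] S) (wedge_seq g (enum (i |: S))).
Proof.
move=> iS; rewrite {1}(sorted_filter_lt_cat i (sorted_enum_set S)) wedge_seq_insert.
by rewrite enum_setU1 // size_filter_lt_enum wsignE.
Qed.

Lemma wedge_seq_delta_enum S : wedge_seq (fun j => delta_mx 0 j) (enum S) = ebasis R S.
Proof.
move: {2}#|S| (erefl #|S|) => n; elim: n S => [|n IH] S cardS.
  by move/eqP: cardS; rewrite cards_eq0 => /eqP ->; rewrite enum_set0 /wedge_seq big_nil.
have [i iS] : exists i, i \in S by apply/set0Pn; rewrite -card_gt0 cardS.
have iSi : i \notin S :\ i by rewrite setD11.
have cardSi : #|S :\ i| = n by move: cardS; rewrite (cardsD1 i S) iS add1n => -[].
have := wedge_seq_enumU1 (fun j => delta_mx 0 j) iSi.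
rewrite (IH _ cardSi) /= vec1_delta wedge_e_ebasis (negbTE iSi) setD1K //=.
move/(congr1 (escale (wsign R [set i] (S :\ i)))).
by rewrite !escalerA wsignE -expr2 sqrr_sign !escale1r.
Qed.

End WedgeSeq.

Section Reflections.
Variables (R : realFieldType) (N : nat).
Implicit Types (j : 'I_N) (u v : 'rV[R]_N).

Lemma dotNr u v : dot u (- v) = - dot u v.
Proof. by rewrite /dot linearN /= mulmxN mxE. Qed.

Lemma dotBl u u' v : dot (u - u') v = dot u v - dot u' v.
Proof. by rewrite /dot mulmxBl !mxE. Qed.

Lemma dotZl k u v : dot (k *: u) v = k * dot u v.
Proof. by rewrite /dot -scalemxAl mxE. Qed.

Lemma dot_delta j v : dot (delta_mx 0 j) v = v 0 j.
Proof. by rewrite /dot -rowE !mxE. Qed.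

Lemma mulmx_refl u v : u *m refl_mx v = u - dot u v *: v.
Proof.
rewrite /refl_mx mulmxBr mulmx1 mulmxA /dot.
by rewrite {1}[u *m v^T]mx11_scalar mul_scalar_mx.
Qed.

Lemma mulmx_refl_self v : dot v v = 2 -> v *m refl_mx v = - v.
Proof. by move=> vv; rewrite mulmx_refl vv scalerDl scale1r opprD addrA subrr sub0r. Qed.

Lemma refl_mxK v : dot v v = 2 -> forall u, u *m refl_mx v *m refl_mx v = u.
Proof.
move=> vv u; rewrite !mulmx_refl dotBl dotZl vv.
have -> : dot u v - dot u v * 2 = - dot u v by ring.
by rewrite scaleNr opprK subrK.
Qed.

Lemma refl_mx_sq v : dot v v = 2 -> refl_mx v *m refl_mx v = 1%:M.
Proof. by move=> vv; apply/row_matrixP => i; rewrite !rowE mulmxA refl_mxK // mulmx1. Qed.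

Lemma trmx_refl v : (refl_mx v)^T = refl_mx v.
Proof. by rewrite /refl_mx linearB /= trmx1 trmx_mul trmxK. Qed.

End Reflections.

Section Tau.
Variables (R : realFieldType) (N : nat).
Local Notation ext := {ffun {set 'I_N} -> R}.
Local Notation e i := (ebasis R [set i]).
Implicit Types (i j : 'I_N) (w : 'M[R]_N) (p v : 'rV[R]_N) (b X : ext) (S : {set 'I_N}).

Lemma tau_ebasis w S : tau w (ebasis R S) = wedge_seq (fun j => delta_mx 0 j *m w) (enum S).
Proof.
rewrite /tau (bigD1 S) //= big1 ?addr0 => [|T nTS]; first by rewrite ffunE eqxx escale1r.
by rewrite ffunE (negbTE nTS) escale0r.
Qed.

Lemma tauD w b1 b2 : tau w (b1 + b2) = tau w b1 + tau w b2.
Proof. by rewrite /tau -big_split; apply: eq_bigr => S _; rewrite ffunE escalerDl. Qed.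

Lemma tau0 w : tau w 0 = 0.
Proof. by rewrite /tau big1 // => S _; rewrite ffunE escale0r. Qed.

Lemma tauZ w k b : tau w (escale k b) = escale k (tau w b).
Proof. by rewrite /tau escaler_sumr; apply: eq_bigr => S _; rewrite ffunE escalerA. Qed.

Lemma tau_sum w (I : Type) (r : seq I) (P : pred I) (F : I -> ext) :
  tau w (\sum_(i <- r | P i) F i) = \sum_(i <- r | P i) tau w (F i).
Proof. exact: (big_morph _ (tauD w) (tau0 w)). Qed.

Lemma tau_ebasis_sum w X : \sum_S escale (X S) (tau w (ebasis R S)) = tau w X.
Proof.
by rewrite [in RHS](ext_sum_ebasis X) tau_sum; apply: eq_bigr => S _; rewrite tauZ.
Qed.

Lemma tau_wedge_e w i X :
  tau w (wedge (e i) X) = wedge (vec1 (delta_mx 0 i *m w)) (tau w X).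
Proof.
rewrite (ext_sum_ebasis X) wedge_sumr !tau_sum wedge_sumr; apply: eq_bigr => S _.
rewrite wedgeZr !tauZ wedgeZr wedge_e_ebasis tau_ebasis; congr escale.
case: (boolP (i \in S)) => iS /=.
  by rewrite tau0 (wedge_seq_mem (fun j => delta_mx 0 j *m w)) // mem_enum.
by rewrite tauZ tau_ebasis (wedge_seq_enumU1 (fun j => delta_mx 0 j *m w) iS).
Qed.

Lemma vec1_mulmx p w : vec1 (p *m w) = \sum_i escale (p 0 i) (vec1 (delta_mx 0 i *m w)).
Proof.
rewrite {1}(row_sum_delta p) mulmx_suml vec1_sum; apply: eq_bigr => i _.
by rewrite -scalemxAl vec1Z.
Qed.

Lemma tau_wedge_vec1 w p X : tau w (wedge (vec1 p) X) = wedge (vec1 (p *m w)) (tau w X).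
Proof.
rewrite wedge_vec1l tau_sum vec1_mulmx wedge_suml; apply: eq_bigr => i _.
by rewrite tauZ wedgeZl tau_wedge_e.
Qed.

(* [u_j sigma_v = u_j - v_j v], and the multiple of [v] is killed by the leading [v]. *)
Lemma wedge_vec1_refl_seq v l :
  wedge (vec1 v) (wedge_seq (fun j => delta_mx 0 j *m refl_mx v) l)
  = wedge (vec1 v) (wedge_seq (fun j => delta_mx 0 j) l).
Proof.
elim: l => [|j l IH]; first by rewrite /wedge_seq !big_nil.
rewrite !wedge_seq_cons /= mulmx_refl dot_delta vec1D vec1N vec1Z.
rewrite wedgeDl wedgeNl wedgeZl wedgeDr wedgeNr wedgeZr wedge_vec1_self escaler0 subr0.
by rewrite wedge_vec1_swap IH -wedge_vec1_swap.
Qed.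

Lemma tau_refl_wedge v b : dot v v = 2 ->
  tau (refl_mx v) (wedge (vec1 v) b) = - wedge (vec1 v) b.
Proof.
move=> vv; rewrite tau_wedge_vec1 mulmx_refl_self // vec1N wedgeNl; congr (- _).
rewrite (ext_sum_ebasis b) tau_sum !wedge_sumr; apply: eq_bigr => S _.
by rewrite tauZ !wedgeZr tau_ebasis wedge_vec1_refl_seq wedge_seq_delta_enum.
Qed.

End Tau.

Section RootSystem.
Variables (R : realFieldType) (N : nat) (Rt : seq 'rV[R]_N) (u0 : 'rV[R]_N).
Hypotheses (rootsRt : root_system Rt) (genu0 : generic Rt u0).
Local Notation Rp := (pos_roots Rt u0).
Implicit Types (a s u v : 'rV[R]_N).

Lemma root_norm v : v \in Rt -> dot v v = 2.
Proof. by case: rootsRt => _ _ normR _ _; apply: normR. Qed.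

Lemma pos_root_norm v : v \in Rp -> dot v v = 2.
Proof. by rewrite mem_filter => /andP [_ /root_norm]. Qed.

Lemma root_refl u v : u \in Rt -> v \in Rt -> u *m refl_mx v \in Rt.
Proof. by case: rootsRt => _ _ _ reflR _; apply: reflR. Qed.

Lemma root_oppE v : (- v \in Rt) = (v \in Rt).
Proof.
suff root_opp u : u \in Rt -> - u \in Rt by apply/idP/idP => /root_opp; rewrite ?opprK.
by move=> uR; rewrite -(mulmx_refl_self (root_norm uR)) root_refl.
Qed.

Lemma root_exists : (0 < N)%N -> exists s, s \in Rt.
Proof.
move=> N_gt0; case: Rt rootsRt => [|s l] [_ span_full _ _ _]; last by exists s; rewrite inE eqxx.
have : (delta_mx 0 (Ordinal N_gt0) : 'rV[R]_N) \in <<[::] : seq 'rV[R]_N>>%VS.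
  by rewrite span_full memvf.
rewrite span_nil memv0 => /eqP /matrixP /(_ 0 (Ordinal N_gt0)).
by rewrite !mxE !eqxx /= => /eqP; rewrite oner_eq0.
Qed.

(* [Rt] is the disjoint union of [Rp] and [- Rp], since [u0] is orthogonal to no root. *)
Lemma sum_roots_even (V : zmodType) (f : 'rV[R]_N -> V) : (forall v, f (- v) = f v) ->
  \sum_(v <- Rt) f v = (\sum_(v <- Rp) f v) *+ 2.
Proof.
move=> fN; have Rt_uniq : uniq Rt by case: rootsRt.
rewrite (bigID (fun v => 0 < dot u0 v)) /= mulr2n; congr (_ + _).
  by rewrite /pos_roots big_filter.
rewrite -big_filter.
transitivity (\sum_(v <- map -%R [seq v <- Rt | ~~ (0 < dot u0 v)]) f v).
  by rewrite big_map; apply: eq_bigr => v _; rewrite fN.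
apply: perm_big; apply: uniq_perm.
- by rewrite (map_inj_uniq oppr_inj) filter_uniq.
- by rewrite /pos_roots filter_uniq.
move=> x; rewrite /pos_roots -[x in LHS]opprK mem_map; last exact: oppr_inj.
rewrite !mem_filter dotNr root_oppE oppr_gt0 -leNgt.
have [xR|] := boolP (x \in Rt); rewrite ?andbF //.
by rewrite le_eqVlt eq_sym (negbTE (genu0 xR)).
Qed.

Lemma size_roots : (size Rt)%:R = ((size Rp)%:R *+ 2 : R).
Proof.
have := @sum_roots_even R (fun _ => 1) (fun _ => erefl).
by rewrite !big_const_seq !count_predT !iter_addr_0.
Qed.

Definition root_gram : 'M[R]_N := \sum_(v <- Rt) v^T *m v.

Lemma root_gram_reflJ s : s \in Rt -> refl_mx s *m root_gram *m refl_mx s = root_gram.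
Proof.
move=> sR; have reflK := refl_mxK (root_norm sR).
rewrite /root_gram mulmx_sumr mulmx_suml.
transitivity (\sum_(v <- map (fun u => u *m refl_mx s) Rt) v^T *m v).
  by rewrite big_map; apply: eq_bigr => v _; rewrite trmx_mul trmx_refl !mulmxA.
apply: perm_big; apply: uniq_perm.
- rewrite map_inj_uniq; first by case: rootsRt.
  by move=> x y /(congr1 (mulmx^~ (refl_mx s))); rewrite !reflK.
- by case: rootsRt.
move=> x; apply/mapP/idP => [[y yR ->]|xR]; first exact: root_refl.
by exists (x *m refl_mx s); rewrite ?reflK ?root_refl.
Qed.

Lemma root_gram_reflC s : s \in Rt -> root_gram *m refl_mx s = refl_mx s *m root_gram.
Proof.
move=> sR; rewrite -{1}(root_gram_reflJ sR) -!mulmxA refl_mx_sq ?mulmx1 //.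
exact: root_norm.
Qed.

Lemma root_gram_W_comm w : inW Rt w -> root_gram *m w = w *m root_gram.
Proof.
elim => [|v w' vR _ IH]; first by rewrite mulmx1 mul1mx.
by rewrite mulmxA IH -mulmxA root_gram_reflC // mulmxA.
Qed.

Lemma root_gram_eigen s : s \in Rt -> exists c, s *m root_gram = c *: s.
Proof.
move=> sR; set y := s *m root_gram; exists (dot y s / 2).
have y_refl : y - dot y s *: s = - y.
  by rewrite -mulmx_refl /y -mulmxA root_gram_reflC // mulmxA mulmx_refl_self ?root_norm // mulNmx.
have two_y : y + y = dot y s *: s by rewrite -{1}(opprK y) -y_refl opprB subrK.
have two_neq0 : (2 : R) != 0 by rewrite pnatr_eq0.
apply: (scalerI two_neq0).
by rewrite scalerA mulrCA mulfV // mulr1 scaler_nat mulr2n two_y.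
Qed.

(* [sigma_u = w^-1 sigma_s w] forces [u] to be a multiple of [s w]. *)
Lemma root_gram_conj_eigen u s c : one_refl_class Rt -> u \in Rt -> s \in Rt ->
  s *m root_gram = c *: s -> u *m root_gram = c *: u.
Proof.
move=> conj uR sR sc; have [w [Ww [Uw refl_u]]] := conj u s uR sR.
have uTu : u^T *m u = invmx w *m s^T *m (s *m w).
  move: refl_u; rewrite /refl_mx mulmxBr mulmx1 mulmxBl mulVmx // => /eqP.
  by rewrite (can_eq (addKr 1%:M)) eqr_opp !mulmxA => /eqP.
have two_u : 2 *: u = (u *m invmx w *m s^T) 0 0 *: (s *m w).
  rewrite -(root_norm uR) /dot -mul_scalar_mx -mx11_scalar -mulmxA uTu !mulmxA.
  by rewrite -mulmxA -mul_scalar_mx -mx11_scalar.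
have two_neq0 : (2 : R) != 0 by rewrite pnatr_eq0.
apply: (scalerI two_neq0); rewrite scalemxAl two_u -scalemxAl.
rewrite -[s *m w *m root_gram]mulmxA -(root_gram_W_comm Ww) mulmxA sc -scalemxAl.
by rewrite scalerA [_ * c]mulrC -scalerA -two_u !scalerA mulrC.
Qed.

Lemma root_gram_scalar : one_refl_class Rt -> (0 < N)%N -> exists c, root_gram = c%:M.
Proof.
move=> conj N_gt0; have [s sR] := root_exists N_gt0; have [c sc] := root_gram_eigen sR.
exists c; apply/row_matrixP => i; rewrite !rowE mul_mx_scalar.
have iRt : delta_mx 0 i \in <<Rt>>%VS by case: rootsRt => _ -> _ _ _; exact: memvf.
rewrite (coord_span (X := in_tuple Rt) iRt) mulmx_suml scaler_sumr; apply: eq_bigr => j _.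
rewrite -scalemxAl (root_gram_conj_eigen conj _ sR sc) ?scalerA 1?mulrC //.
by apply: mem_nth; exact: ltn_ord.
Qed.

Lemma root_gram_trace : \tr root_gram = 2 *+ size Rt.
Proof.
transitivity (\sum_(v <- Rt) (2 : R)); last by rewrite big_const_seq count_predT iter_addr_0.
rewrite /root_gram raddf_sum; apply: eq_big_seq => v vR.
by rewrite /= mxtrace_mulC trace_mx11; exact: root_norm.
Qed.

Lemma sum_pos_roots_dot a : one_refl_class Rt -> (0 < N)%N ->
  \sum_(v <- Rp) dot a v *: v = coxeter Rp *: a.
Proof.
move=> conj N_gt0; have [c gramE] := root_gram_scalar conj N_gt0.
have N_neq0 : (N%:R : R) != 0 by rewrite pnatr_eq0 -lt0n.
have c_eq : c = 2 * coxeter Rp.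
  apply: (mulIf N_neq0); rewrite mulr_natr -mxtrace_scalar -gramE root_gram_trace.
  rewrite -mulr_natr size_roots /coxeter -[RHS]mulrA divfK //.
  by rewrite -[(size Rp)%:R *+ 2]mulr_natl.
have sum_roots : \sum_(v <- Rt) dot a v *: v = c *: a.
  rewrite -mul_mx_scalar -gramE /root_gram mulmx_sumr; apply: eq_bigr => v _.
  by rewrite mulmxA [a *m v^T]mx11_scalar mul_scalar_mx.
have two_neq0 : (2 : R) != 0 by rewrite pnatr_eq0.
apply: (scalerI two_neq0); rewrite scaler_nat -(sum_roots_even (f := fun v => dot a v *: v)).
  by rewrite /= sum_roots c_eq scalerA.
by move=> v /=; rewrite dotNr scaleNr scalerN opprK.
Qed.

Lemma coxeter_neq0 : (0 < N)%N -> coxeter Rp != 0.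
Proof.
move=> N_gt0; have [s sR] := root_exists N_gt0.
have Rt_neq0 : (size Rt != 0)%N by case: (Rt) sR.
rewrite /coxeter !mulf_neq0 ?invr_eq0 ?pnatr_eq0 //; last by rewrite -lt0n.
apply: contra Rt_neq0 => /eqP Rp0.
by rewrite -(@pnatr_eq0 R) size_roots Rp0 mul0rn eqxx.
Qed.

End RootSystem.

Section Polynomials.
Variables (R : realFieldType) (N : nat).
Local Notation poly := {mpoly R[N]}.
Local Notation ext := {ffun {set 'I_N} -> R}.
Implicit Types (i j : 'I_N) (c d : ext) (v : 'rV[R]_N) (f : 'I_N -> R).

Lemma mderiv_linear f i : mderiv i (\sum_j f j *: 'X_j : poly) = (f i)%:MP.
Proof.
rewrite (big_morph (mderiv i) (mderivD i) (@mderiv0 _ _ i)) (bigD1 i) //= big1 ?addr0.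
  rewrite mderivZ mderivX mnm1E eqxx scale1r.
  have -> : (U_(i) - U_(i))%MM = 0%MM by apply/mnmP => k; rewrite mnmBE subnn mnm0E.
  by rewrite mpolyX0 -mul_mpolyC mulr1.
by move=> j nji; rewrite mderivZ mderivX mnm1E (negbTE nji) scale0r scaler0.
Qed.

Lemma wedge_tens (p q : poly) c d : wedge (tens p c) (tens q d) = tens (p * q) (wedge c d).
Proof.
apply/ffunP => U; rewrite !ffunE rmorph_sum mulr_sumr; apply: eq_bigr => S _.
rewrite rmorph_sum mulr_sumr; apply: eq_bigr => T _; rewrite !ffunE.
case: ifP => _; last by rewrite rmorph0 mulr0.
by rewrite /wsign !rmorphM rmorphXn rmorphN1 /=; ring.
Qed.

Lemma tensDr (p : poly) c d : tens p (c + d) = tens p c + tens p d.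
Proof. by apply/ffunP => S; rewrite !ffunE mpolyCD mulrDr. Qed.

Lemma tens0r (p : poly) : tens p (0 : ext) = 0.
Proof. by apply/ffunP => S; rewrite !ffunE mpolyC0 mulr0. Qed.

Lemma tensC k c : tens k%:MP c = cst (escale k c).
Proof. by apply/ffunP => S; rewrite !ffunE mpolyCM mul1r. Qed.

Lemma cstD c d : cst (c + d) = cst c + cst d.
Proof. exact: tensDr. Qed.

Lemma cst0 : cst (0 : ext) = 0.
Proof. exact: tens0r. Qed.

Lemma cst_sum (I : Type) (r : seq I) (P : pred I) (F : I -> ext) :
  cst (\sum_(i <- r | P i) F i) = \sum_(i <- r | P i) cst (F i).
Proof. exact: (big_morph _ cstD cst0). Qed.

Lemma cstZ k c : k *: cst c = cst (escale k c).
Proof. by apply/ffunP => S; rewrite !ffunE !mul1r -mul_mpolyC mpolyCM. Qed.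

Lemma psub_linear f w :
  psub w (\sum_j f j *: 'X_j) = \sum_j f j *: \sum_i w i j *: ('X_i : poly).
Proof.
rewrite /psub (big_morph _ (comp_mpolyD _) (comp_mpoly0 _)); apply: eq_bigr => j _.
by rewrite comp_mpolyZ comp_mpolyXU -tnth_nth tnth_mktuple.
Qed.

Lemma sub_psub_refl_linear v f :
  (\sum_j f j *: 'X_j : poly) - psub (refl_mx v) (\sum_j f j *: 'X_j)
  = (\sum_j f j * v 0 j)%:MP * linpoly v.
Proof.
have refl_X j : \sum_i refl_mx v i j *: ('X_i : poly) = 'X_j - v 0 j *: linpoly v.
  under eq_bigr => i _ do rewrite !mxE big_ord1 !mxE scalerBl.
  rewrite sumrB /linpoly scaler_sumr; congr (_ - _).
    rewrite (bigD1 j) //= big1 ?addr0 ?eqxx ?scale1r // => i nij.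
    by rewrite (negbTE nij) scale0r.
  by apply: eq_bigr => i _; rewrite scalerA mulrC.
rewrite psub_linear.
have -> : \sum_j f j *: \sum_i refl_mx v i j *: ('X_i : poly)
    = \sum_j (f j *: 'X_j - f j *: (v 0 j *: linpoly v)).
  by apply: eq_bigr => j _; rewrite refl_X scalerBr.
rewrite sumrB opprB addrC subrK mul_mpolyC scaler_suml.
by apply: eq_bigr => j _; rewrite scalerA.
Qed.

Lemma linpoly_neq0 v : dot v v = 2 -> linpoly v != 0.
Proof.
move=> vv; apply/eqP => v0.
have v_eq0 k : v 0 k = 0.
  have := mderiv_linear (fun j => v 0 j) k; rewrite -/(linpoly v) v0 mderiv0.
  by move/esym/eqP; rewrite mpolyC_eq0 => /eqP.
move: vv; rewrite /dot mxE big1 => [/eqP|k _]; last by rewrite !mxE v_eq0 mul0r.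
by rewrite eq_sym pnatr_eq0.
Qed.

Lemma ddiff_linear v f : dot v v = 2 ->
  ddiff v (\sum_j f j *: 'X_j) = (\sum_j f j * v 0 j)%:MP.
Proof.
move=> vv; rewrite /ddiff.
set P := fun q => _ = q * linpoly v.
have /(epsilon_spec (inhabits 0)) : exists q, P q by eexists; exact: sub_psub_refl_linear.
rewrite /P sub_psub_refl_linear => P_eps.
by apply: (mulIf (linpoly_neq0 vv)); rewrite -P_eps.
Qed.

End Polynomials.

Section Singular.
Variables (R : realFieldType) (N : nat) (b : {ffun {set 'I_N} -> R}).
Local Notation e i := (ebasis R [set i]).
Local Notation F := (wedge (xvec R N) (cst b)).
Implicit Types (i j : 'I_N) (S : {set 'I_N}).

Lemma xvec_wedge_cst : F = \sum_j tens 'X_j (wedge (e j) b).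
Proof.
rewrite /xvec wedge_suml; apply: eq_bigr => j _.
by rewrite /cst wedge_tens mulr1.
Qed.

Lemma xvec_wedge_cstE S : F S = \sum_j wedge (e j) b S *: 'X_j.
Proof.
rewrite xvec_wedge_cst sum_ffunE; apply: eq_bigr => j _.
by rewrite ffunE mulrC mul_mpolyC.
Qed.

Lemma xvec_wedge_homog S : F S \is 1.-homog.
Proof.
rewrite xvec_wedge_cstE; apply: rpred_sum => j _; apply: rpredZ.
by rewrite dhomogX; apply/eqP; exact: mpoly.mdeg1.
Qed.

Lemma is_kvec_wedge_e m j : is_kvec m b -> is_kvec m.+1 (wedge (e j) b).
Proof.
move=> bm U cardU; rewrite ffunE big1 // => S _; rewrite big1 // => T _.
case: ifP => // /andP [/eqP ST0 /eqP STU].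
rewrite !ffunE; case: eqP => [Sj|]; last by rewrite mulr0 mul0r.
rewrite bm ?mulr0 //; apply: contra cardU => /eqP cardT.
have jT : j \notin T by rewrite -disjoints1 -setI_eq0 -Sj ST0.
by rewrite -STU Sj cardsU1 cardT jT.
Qed.

Lemma xvec_wedge_kvec m : is_kvec m b -> is_kvec m.+1 F.
Proof.
move=> bm S cardS; rewrite xvec_wedge_cstE big1 // => j _.
by rewrite (is_kvec_wedge_e _ bm) // scale0r.
Qed.

Lemma wedge_vec1E v S : wedge (vec1 v) b S = \sum_j wedge (e j) b S * v 0 j.
Proof.
rewrite wedge_vec1l sum_ffunE; apply: eq_bigr => j _.
by rewrite ffunE mulrC.
Qed.

Variables (Rt : seq 'rV[R]_N) (u0 : 'rV[R]_N) (kappa : R).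
Hypotheses (rootsRt : root_system Rt) (genu0 : generic Rt u0) (conj : one_refl_class Rt).
Hypothesis N_gt0 : (0 < N)%N.
Local Notation Rp := (pos_roots Rt u0).

Lemma dunkl_xvec_wedge i :
  dunkl Rp kappa i F = cst (escale (1 - coxeter Rp * kappa) (wedge (e i) b)).
Proof.
have ddiffF v S : v \in Rp -> ddiff v (F S) = (wedge (vec1 v) b S)%:MP.
  move=> vRp; rewrite xvec_wedge_cstE ddiff_linear ?wedge_vec1E //.
  exact: pos_root_norm rootsRt _ vRp.
have refl_part :
    \sum_(v <- Rp) \sum_S escale (kappa * v 0 i)
        (escale (wedge (vec1 v) b S) (tau (refl_mx v) (ebasis R S)))
    = - escale (coxeter Rp * kappa) (wedge (e i) b).
  transitivity (- escale kappa (wedge (vec1 (\sum_(v <- Rp) dot (delta_mx 0 i) v *: v)) b)).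
    rewrite vec1_sum wedge_suml escaler_sumr -sumrN big_seq [RHS]big_seq.
    apply: eq_bigr => v vRp; rewrite -escaler_sumr tau_ebasis_sum tau_refl_wedge.
      by rewrite dot_delta vec1Z wedgeZl escalerA escalerN.
    exact: pos_root_norm rootsRt _ vRp.
  by rewrite sum_pos_roots_dot // vec1Z vec1_delta wedgeZl escalerA mulrC.
rewrite /dunkl.
transitivity (\sum_S (cst (escale (wedge (e i) b S) (ebasis R S)) +
   \sum_(v <- Rp) cst (escale (kappa * v 0 i)
      (escale (wedge (vec1 v) b S) (tau (refl_mx v) (ebasis R S)))))).
  apply: eq_bigr => S _; congr (_ + _); first by rewrite xvec_wedge_cstE mderiv_linear tensC.
  rewrite big_seq [RHS]big_seq; apply: eq_bigr => v vRp.
  by rewrite ddiffF // -mul_mpolyC -mpolyCM tensC escalerA.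
rewrite big_split /= exchange_big /=.
under [X in _ + X]eq_bigr => v _ do rewrite -cst_sum.
rewrite -!cst_sum -cstD -ext_sum_ebasis refl_part.
by rewrite escalerDl escale1r escaleNr.
Qed.

End Singular.

Theorem theorem3p5 (R : realFieldType) (N : nat) (Rt : seq 'rV[R]_N)
    (u0 : 'rV[R]_N) (kappa : R) (m : nat) (a : 'rV[R]_N)
    (b : {ffun {set 'I_N} -> R}) :
  root_system Rt -> generic Rt u0 -> one_refl_class Rt ->
  (1 <= m <= N)%N -> is_kvec m b ->
  let Rp := pos_roots Rt u0 in
  let gamma := coxeter Rp in
  let F := wedge (xvec R N) (cst b) in
  [/\ (forall S : {set 'I_N}, F S \is 1.-homog),
      is_kvec m.+1 F,
      \sum_(i < N) a 0 i *: dunkl Rp kappa i F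
        = cst (escale (1 - gamma * kappa) (wedge (vec1 a) b))
    & (kappa = gamma^-1 -> forall i : 'I_N, dunkl Rp kappa i F = 0)].
Proof.
move=> rootsRt genu0 conj /andP [m_gt0 m_leN] bm; cbv zeta.
have N_gt0 : (0 < N)%N := leq_trans m_gt0 m_leN.
have DF := dunkl_xvec_wedge b kappa rootsRt genu0 conj N_gt0.
split.
- exact: xvec_wedge_homog.
- exact: xvec_wedge_kvec.
- under eq_bigr do rewrite DF cstZ.
  rewrite -cst_sum wedge_vec1l escaler_sumr; congr cst; apply: eq_bigr => i _.
  by rewrite !escalerA mulrC.
- move=> kappaE i; rewrite DF kappaE mulfV ?(coxeter_neq0 rootsRt genu0 N_gt0) //.
  by rewrite subrr escale0r cst0.
Qed.
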